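(* Let $N\ge1$, $T>0$, and consider minimizing $\int_0^T\mathbb V(t)\,dt$ with $\mathbb V=\frac1N\sum_i\xi_i^2$ over $\alpha\in\mathcal U$, where $\dot\xi_i=-\xi_i+(1-\alpha_i)\bar\xi$, $\bar\xi=\frac1N\sum_j\xi_j$, with $\bar\xi(0)>0$ and $\xi_1(0)\ge\dots\ge\xi_N(0)$. Let $\alpha$ be an optimal control whose trajectory satisfies $\xi_i(t)\ge\xi_j(t)$ for all $t\in[0,T]$ and all $i<j$, and let $\lambda$ be a (normal) covector associated with it by the Pontryagin maximum principle, i.e. $\dot\lambda_i=\lambda_i-\frac1N\sum_j(1-\alpha_j)\lambda_j-2\xi_i$ for $i=1,\dots,N$, with $\lambda(T)=0$. Then for all $t\in[0,T]$ and all $i<j$, $\lambda_i(t)\ge\lambda_j(t)$.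
   Context: $\mathcal U$ is the set of measurable $\alpha:[0,T]\to[0,1]^N$ with $\sum_i\alpha_i(t)\le1$ for all $t$. The covector equation comes from the Hamiltonian $H=-\sum_i\lambda_i\xi_i+\bar\xi\sum_i(1-\alpha_i)\lambda_i+\sum_i\xi_i^2$. *)

From HB Require Import structures.
From mathcomp Require Import all_boot all_order all_algebra.
From mathcomp Require Import all_classical all_reals all_analysis.
Set Implicit Arguments. Unset Strict Implicit. Unset Printing Implicit Defensive.
Import Order.TTheory GRing.Theory Num.Theory.
Import numFieldNormedType.Exports.
Local Open Scope classical_set_scope.
Local Open Scope ring_scope.

Section Defs.
Variables (R : realType) (N : nat).

Definition Rint (D : set R) (f : R -> R) : R :=
  Rintegral (@lebesgue_measure R) D f.

Definition xbar (xi : R -> 'I_N -> R) (t : R) : R :=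
  N%:R^-1 * \sum_(j < N) xi t j.

Definition admissible (T : R) (alpha : R -> 'I_N -> R) : Prop :=
  (forall i, measurable_fun `[0, T] (fun t => alpha t i)) /\
  (forall t, t \in `[0, T] ->
     (forall i, 0 <= alpha t i <= 1) /\ \sum_(i < N) alpha t i <= 1).

Definition trajectory (T : R) (alpha xi : R -> 'I_N -> R) : Prop :=
  (forall i, {within `[0, T], continuous (fun t => xi t i)}) /\
  (forall i t, t \in `[0, T] ->
     xi t i = xi 0 i +
       Rint `[0, t] (fun s => - xi s i + (1 - alpha s i) * xbar xi s)).

Definition cost (T : R) (xi : R -> 'I_N -> R) : R :=
  Rint `[0, T] (fun t => N%:R^-1 * \sum_(i < N) xi t i ^+ 2).

Definition optimal (T : R) (alpha xi : R -> 'I_N -> R) : Prop :=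
  forall alpha' xi', admissible T alpha' -> trajectory T alpha' xi' ->
    (forall i, xi' 0 i = xi 0 i) -> cost T xi <= cost T xi'.

Definition costate (T : R) (alpha xi lam : R -> 'I_N -> R) : Prop :=
  (forall i, {within `[0, T], continuous (fun t => lam t i)}) /\
  (forall i, lam T i = 0) /\
  (forall i t, t \in `[0, T] ->
     lam t i = lam T i -
       Rint `[t, T] (fun s => lam s i
          - N%:R^-1 * \sum_(j < N) (1 - alpha s j) * lam s j
          - 2 * xi s i)).

End Defs.

(* The gap mu := lam_i - lam_j solves the backward linear equation
   mu' = mu - 2 (xi_i - xi_j) with mu(T) = 0, whose source term 2 (xi_i - xi_j)
   is nonnegative by the ordering of the trajectory.  If mu(t) < 0, let c be
   the first zero of mu after t: on [t, c] we have mu <= 0, so the integrand of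
   mu(t) - mu(c) = int_t^c (2 (xi_i - xi_j) - mu) is nonnegative, whence
   mu(t) >= mu(c) = 0. *)

From Pilot Require Import Defs.
From HB Require Import structures.
From mathcomp Require Import all_boot all_order all_algebra.
From mathcomp Require Import all_classical all_reals all_analysis.
From mathcomp Require Import measurable_realfun.
From mathcomp Require Import ring lra.
Set Implicit Arguments. Unset Strict Implicit. Unset Printing Implicit Defensive.
Import Order.TTheory GRing.Theory Num.Theory.
Import numFieldNormedType.Exports.
Local Open Scope classical_set_scope.
Local Open Scope ring_scope.

Section segment.
Variable R : realType.

Lemma closed_segment_preimage (a b : R) (f : R -> R) (D : set R) :
  {within `[a, b], continuous f} -> closed D -> closed (`[a, b] `&` f @^-1` D).
Proof.
move=> /continuous_closedP cf cD.
have /closed_subspaceP [V cV VE] := cf D cD.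
have -> : `[a, b] `&` f @^-1` D = V `&` `[a, b] by rewrite VE setIC.
by apply: closedI => //; exact: itv_closed.
Qed.

Lemma first_root (a b : R) (f : R -> R) :
  a <= b -> {within `[a, b], continuous f} -> f a < 0 -> 0 <= f b ->
  exists2 c, c \in `[a, b] & f c = 0 /\ {in `[a, c], forall s, f s <= 0}.
Proof.
move=> ab cf fa0 fb0.
pose Z := `[a, b] `&` f @^-1` [set 0].
have root_in (c : R) : a <= c <= b -> 0 <= f c -> exists2 r, Z r & r <= c.
  move=> /andP[ac cb] fc0.
  have cf' : {within `[a, c], continuous f}.
    by apply: continuous_subspaceW cf; apply: subset_itvl; rewrite bnd_simp.
  have [|r rI fr] := IVT ac cf' (v := 0).
    by rewrite ge_min le_max ltW //= fc0 orbT.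
  move: rI; rewrite in_itv /= => /andP[ar rc].
  by exists r => //; split => //=; rewrite in_itv /= ar (le_trans rc cb).
have [|z Zz _] := root_in b _ fb0; first by rewrite ab lexx.
have lbZ : lbound Z a by move=> s [/=]; rewrite in_itv /= => /andP[].
have [cI fc] : Z (inf Z).
  apply: (itv_closed_infimums (ex_intro _ z Zz)).
    by apply: closed_segment_preimage cf _; exact: closed_eq.
  split; first exact: ge_inf (ex_intro _ a lbZ).
  by move=> y lby; apply: lb_le_inf => //; exists z.
exists (inf Z) => //; split => // s; rewrite in_itv /= => /andP[a_s s_c].
rewrite leNgt; apply/negP => fs0.
have [|r Zr rs] := root_in s _ (ltW fs0).
  by move: cI; rewrite /= in_itv /= a_s => /andP[_]; exact: le_trans.
have cr := ge_inf (ex_intro _ a lbZ) Zr.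
have s_inf : s = inf Z by apply/eqP; rewrite eq_le s_c (le_trans cr rs).
by rewrite s_inf fc ltxx in fs0.
Qed.

Lemma backward_integral_ge0 (a b : R) (f h : R -> R) :
  {within `[a, b], continuous f} -> 0 <= f b ->
  {in `[a, b] &, forall s t, s <= t -> f s = f t + Defs.Rint `[s, t] h} ->
  {in `[a, b], forall s, f s <= 0 -> 0 <= h s} ->
  {in `[a, b], forall t, 0 <= f t}.
Proof.
move=> cf fb0 f_eq h_ge0 t tI; rewrite leNgt; apply/negP => ft0.
have [a_t t_b] : a <= t /\ t <= b by move: tI; rewrite in_itv /= => /andP[].
have sub_ab (c : R) : c <= b -> `[t, c] `<=` `[a, b].
  by move=> c_b; apply: subset_itv; rewrite bnd_simp.
have cf' := continuous_subspaceW (sub_ab b (lexx b)) cf.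
have [c cI [fc f_le0]] := first_root t_b cf' ft0 fb0.
have [t_c c_b] : t <= c /\ c <= b by move: cI; rewrite in_itv /= => /andP[].
have := f_eq t c tI (sub_ab b (lexx b) c cI) t_c; rewrite fc add0r => ftE.
suff : 0 <= Defs.Rint `[t, c] h by rewrite -ftE leNgt ft0.
apply: Rintegral_ge0 => s sI; apply: h_ge0; last exact: f_le0.
exact: sub_ab c_b s sI.
Qed.

Lemma continuous_segment_integrable (a b : R) (f : R -> R) :
  {within `[a, b], continuous f} ->
  (@lebesgue_measure R).-integrable `[a, b] (EFin \o f).
Proof.
by move=> cf; apply: continuous_compact_integrable => //; exact: segment_compact.
Qed.

Lemma Rint_itv_split (a b c : R) (f : R -> R) :
  a <= b -> b <= c -> (@lebesgue_measure R).-integrable `[a, c] (EFin \o f) ->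
  Defs.Rint `[a, c] f = Defs.Rint `[a, b] f + Defs.Rint `[b, c] f.
Proof.
move=> ab bc fi.
have fi' : (@lebesgue_measure R).-integrable `]b, c] (EFin \o f).
  by apply: integrableS fi => //; apply: subset_itv; rewrite bnd_simp.
have := Rintegral_itvB fi (x := b); rewrite !bnd_simp => /(_ ab bc).
by rewrite Rintegral_itv_obnd_cbnd // /Defs.Rint => <-; rewrite addrC subrK.
Qed.

End segment.

Section costate.
Variables (R : realType) (N : nat) (T : R) (alpha xi lam : R -> 'I_N -> R).
Hypotheses (adm : admissible T alpha) (traj : trajectory T alpha xi)
  (cst : costate T alpha xi lam).

Definition costate_rhs (k : 'I_N) (s : R) : R :=
  lam s k - N%:R^-1 * \sum_(j < N) (1 - alpha s j) * lam s j - 2 * xi s k.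

Let mu := @lebesgue_measure R.

Lemma costate_rhs_integrable k a b : 0 <= a -> b <= T ->
  mu.-integrable `[a, b] (EFin \o costate_rhs k).
Proof.
move=> a0 bT; have mI : measurable (`[0, T] : set R) by [].
apply: (@integrableS _ _ _ mu `[0, T]) => //.
  by apply: subset_itv; rewrite bnd_simp.
have [[alpha_meas alpha_bnd] [xi_cont _] [lam_cont _]] := And3 adm traj cst.
have lam_int k' := continuous_segment_integrable (lam_cont k').
have gain_lam_int j :
    mu.-integrable `[0, T] (fun s => ((1 - alpha s j) * lam s j)%:E).
  have gain_bnd : [bounded (1 - alpha s j) | s in `[0, T]].
    exists 1; split; rewrite ?num_real // => M M1 s sI /=.
    have [/(_ j) /andP[alpha_ge0 alpha_le1] _] := alpha_bnd s sI.
    rewrite ler_norml; apply/andP; split; lra.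
  have := integrableMl (mu := mu) mI (lam_int j)
    (measurable_funB (measurable_cst _) (alpha_meas j)) gain_bnd.
  by apply: eq_integrable => // s _ /=; rewrite mulrC.
have mean_int := integrableZl (mu := mu) mI (N%:R^-1)
  (integrable_sum (mu := mu) mI (index_enum 'I_N) (P := predT)
    (fun j _ => gain_lam_int j)).
have := integrableB (mu := mu) mI (integrableB (mu := mu) mI (lam_int k) mean_int)
  (integrableZl (mu := mu) mI 2 (continuous_segment_integrable (xi_cont k))).
by apply: eq_integrable => // s _ /=; rewrite sumEFin -EFinM -EFinB.
Qed.

Lemma costate_increment k a b : 0 <= a -> a <= b -> b <= T ->
  lam a k = lam b k - Defs.Rint `[a, b] (costate_rhs k).
Proof.
move=> a0 ab bT; have [_ [_ lam_eq]] := cst.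
have aI : a \in `[0, T] by rewrite in_itv /= a0 (le_trans ab bT).
have bI : b \in `[0, T] by rewrite in_itv /= (le_trans a0 ab) bT.
rewrite (lam_eq k a aI) (lam_eq k b bI).
rewrite (@Rint_itv_split _ a b T (costate_rhs k)) ?costate_rhs_integrable //.
ring.
Qed.

Lemma costate_gap_increment i j :
  {in `[0, T] &, forall a b, a <= b ->
    lam a i - lam a j = lam b i - lam b j +
      Defs.Rint `[a, b] (fun s => 2 * (xi s i - xi s j) - (lam s i - lam s j))}.
Proof.
move=> a b; rewrite !in_itv /= => /andP[a0 _] /andP[_ bT] ab.
rewrite (costate_increment i a0 ab bT) (costate_increment j a0 ab bT).
have -> : Defs.Rint `[a, b] (fun s => 2 * (xi s i - xi s j) - (lam s i - lam s j))
    = Defs.Rint `[a, b] (costate_rhs j) - Defs.Rint `[a, b] (costate_rhs i).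
  rewrite /Defs.Rint -RintegralB ?costate_rhs_integrable //.
  by apply: eq_Rintegral => s _; rewrite /costate_rhs; ring.
ring.
Qed.

End costate.

Theorem proposition8 (R : realType) (N : nat) (T : R)
    (alpha xi lam : R -> 'I_N -> R) :
  (1 <= N)%N -> 0 < T ->
  0 < xbar xi 0 ->
  (forall i j : 'I_N, (i < j)%N -> xi 0 j <= xi 0 i) ->
  admissible T alpha -> trajectory T alpha xi -> optimal T alpha xi ->
  (forall t, t \in `[0, T] ->
     forall i j : 'I_N, (i < j)%N -> xi t j <= xi t i) ->
  costate T alpha xi lam ->
  forall t, t \in `[0, T] ->
    forall i j : 'I_N, (i < j)%N -> lam t j <= lam t i.
Proof.
move=> _ _ _ _ adm traj _ xi_ord cst t tI i j ij.
have [lam_cont [lamT _]] := cst.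
rewrite -subr_ge0; move: t tI.
apply: (backward_integral_ge0
  (h := fun s => 2 * (xi s i - xi s j) - (lam s i - lam s j))).
- by move=> s; apply: cvgB; [exact: lam_cont i s | exact: lam_cont j s].
- by rewrite !lamT subrr.
- exact: (costate_gap_increment adm traj cst i j).
- move=> s sI gap_le0; have := xi_ord s sI i j ij; lra.
Qed.
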